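(* Let $r\in(0,1)$ and let $p=T^3+rT^2+T+r$ over $\mathbb T$. Then a polynomial $q$ over $\mathbb T$ satisfies $p\in(T+r)\boxdot q$ if and only if $q=T^2+sT+1$ for some $s\in[0,r]$. In particular $r^{-2}T^2+r^{-1}T+1$ is not such a quotient.
   Context: The tropical hyperfield $\mathbb T$ is $\mathbb R_{\ge0}$ with usual multiplication and hyperaddition $a\boxplus b=\{\max\{a,b\}\}$ if $a\ne b$, $a\boxplus a=[0,a]$ (so $c\in a\boxplus b$ iff the maximum of $a,b,c$ is attained at least twice). Polynomials over $\mathbb T$ are finitely supported sequences $\sum c_iT^i$; the hyperproduct is $p\boxdot q=\{\sum e_iT^i : e_i\in \boxplus_{k+l=i} c_kd_l\}$, with iterated sums $\boxplus_{i=1}^n a_i=\bigcup_{b\in\boxplus_{i=1}^{n-1}a_i} b\boxplus a_n$. *)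

(* the tropical hyperfield T = R_{>=0} inside Stdlib's R. *)
From Stdlib Require Import Reals List.
Open Scope R_scope.

Definition hadd (a b c : R) : Prop :=
  if Req_EM_T a b then 0 <= c <= a else c = Rmax a b.

Fixpoint hsum_from (acc : R -> Prop) (l : list R) : R -> Prop :=
  match l with
  | nil => acc
  | a :: l' => hsum_from (fun c => exists b, acc b /\ hadd b a c) l'
  end.

Definition hsum (a1 : R) (l : list R) (c : R) : Prop :=
  hsum_from (fun x => x = a1) l c.

Definition tpoly := nat -> R.

Definition is_tpoly (p : tpoly) : Prop :=
  (forall i, 0 <= p i) /\ exists N, forall i, (N <= i)%nat -> p i = 0.

(* e_i \in [+]_{k+l=i} c_k d_l, with the terms ordered k = 0, 1, ..., i *)
Definition in_hcoef (c d : tpoly) (i : nat) (x : R) : Prop :=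
  hsum (c 0%nat * d i) (map (fun k => c k * d (i - k)%nat) (seq 1 i)) x.

Definition in_hprod (c d e : tpoly) : Prop :=
  is_tpoly e /\ forall i, in_hcoef c d i (e i).

Definition tpoly4 (a0 a1 a2 a3 : R) : tpoly :=
  fun i => match i with
           | 0%nat => a0 | 1%nat => a1 | 2%nat => a2 | 3%nat => a3 | _ => 0
           end.

From Stdlib Require Import Reals Lra Lia List FunctionalExtensionality.
Open Scope R_scope.

(* Hypermultiplication by a linear polynomial aT + b is
   local: the coefficient e_0 is b d_0 and every e_(j+1) is a single
   hypersum  b d_(j+1) [+] a d_j  (all other products vanish, and adding
   zeros does not change a nonnegative hypersum).  For p = T^3+rT^2+T+r and
   the factor T + r this gives the recursion  p_(j+1) in r q_(j+1) [+] q_j.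
   Since p_(j+1) = 0 for j >= 3 and q has finite support, a downward
   induction forces q_j = 0 for j >= 3; then the relations for p_3, p_2
   and p_0 read q_2 = 1, q_1 <= r and q_0 = 1.  Conversely every q = T^2 + sT + 1
   with s <= r satisfies all the relations. *)

Lemma hadd_nonneg a b c : 0 <= a -> 0 <= b -> hadd a b c -> 0 <= c.
Proof.
  unfold hadd; destruct (Req_EM_T a b) as [_|_]; intros Ha Hb Hc; [lra|].
  subst c; unfold Rmax; destruct (Rle_dec a b); lra.
Qed.

Lemma hadd_comm a b c : hadd a b c <-> hadd b a c.
Proof.
  unfold hadd; destruct (Req_EM_T a b), (Req_EM_T b a); subst; try lra.
  rewrite Rmax_comm; tauto.
Qed.

Lemma hadd_0_l b c : 0 <= b -> hadd 0 b c <-> c = b.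
Proof.
  intro Hb; unfold hadd; destruct (Req_EM_T 0 b) as [<-|Hne]; [split; lra|].
  unfold Rmax; destruct (Rle_dec 0 b); [tauto | lra].
Qed.

Lemma hadd_self_l a b : 0 <= a -> hadd a b a <-> b <= a.
Proof.
  intro Ha; unfold hadd; destruct (Req_EM_T a b) as [<-|Hne]; [split; lra|].
  unfold Rmax; destruct (Rle_dec a b) as [Hab|Hab]; [|split; lra].
  split; intro H; [congruence | destruct Hne; lra].
Qed.

Lemma hsum_from_zeros (l : list R) :
  (forall a, In a l -> a = 0) ->
  forall acc : R -> Prop, (forall x, acc x -> 0 <= x) ->
  forall x, hsum_from acc l x <-> acc x.
Proof.
  induction l as [|a l IH]; intros Hl acc Hacc x; simpl; [tauto|].
  assert (Ha : a = 0) by (apply Hl; simpl; auto); subst a.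
  assert (Hstep : forall y, (exists b, acc b /\ hadd b 0 y) <-> acc y).
  { intro y; split.
    - intros [b [Hb Hy]].
      apply hadd_comm, hadd_0_l in Hy; [subst; exact Hb | exact (Hacc b Hb)].
    - intro Hy; exists y; split; [exact Hy|].
      apply hadd_comm, hadd_0_l; [exact (Hacc y Hy) | reflexivity]. }
  rewrite IH; [apply Hstep | intros a Ha; apply Hl; simpl; auto |].
  intros y Hy; apply Hacc, Hstep, Hy.
Qed.

Lemma in_hcoef_linear_0 a b d x :
  in_hcoef (tpoly4 b a 0 0) d 0 x <-> x = b * d 0%nat.
Proof. unfold in_hcoef, hsum; simpl; tauto. Qed.

Lemma in_hcoef_linear_S a b d j x :
  0 <= a -> 0 <= b -> (forall i, 0 <= d i) ->
  in_hcoef (tpoly4 b a 0 0) d (S j) x <-> hadd (b * d (S j)) (a * d j) x.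
Proof.
  intros Ha Hb Hd; unfold in_hcoef, hsum.
  change (seq 1 (S j)) with (1%nat :: seq 2 j); cbn [map hsum_from].
  replace (tpoly4 b a 0 0 1%nat * d (S j - 1)%nat) with (a * d j)
    by (simpl; rewrite Nat.sub_0_r; reflexivity).
  rewrite hsum_from_zeros.
  - split; [intros [c [-> H]]; exact H | intro H; eauto].
  - intros c Hc; apply in_map_iff in Hc; destruct Hc as [k [<- Hk]].
    apply in_seq in Hk.
    destruct k as [|[|[|[|k]]]]; try lia; simpl; apply Rmult_0_l.
  - intros y [c [-> Hy]]; refine (hadd_nonneg _ _ _ _ _ Hy);
      apply Rmult_le_pos; auto.
Qed.

Lemma in_hprod_linear a b d e :
  0 <= a -> 0 <= b -> (forall i, 0 <= d i) ->
  in_hprod (tpoly4 b a 0 0) d e <->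
  is_tpoly e /\ e 0%nat = b * d 0%nat /\
  forall j, hadd (b * d (S j)) (a * d j) (e (S j)).
Proof.
  intros Ha Hb Hd; unfold in_hprod; split.
  - intros [He Hc]; split; [exact He|]; split.
    + exact (proj1 (in_hcoef_linear_0 a b d _) (Hc 0%nat)).
    + intro j; exact (proj1 (in_hcoef_linear_S a b d j _ Ha Hb Hd) (Hc (S j))).
  - intros [He [H0 HS]]; split; [exact He|].
    intros [|j]; [apply in_hcoef_linear_0, H0 | apply in_hcoef_linear_S; auto].
Qed.

Lemma tpoly4_is_tpoly a0 a1 a2 a3 :
  0 <= a0 -> 0 <= a1 -> 0 <= a2 -> 0 <= a3 -> is_tpoly (tpoly4 a0 a1 a2 a3).
Proof.
  intros; split.
  - intros [|[|[|[|i]]]]; simpl; auto; lra.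
  - exists 4%nat; intros [|[|[|[|i]]]] Hi; try lia; reflexivity.
Qed.

Lemma vanishing_downward (q : nat -> R) (m N : nat) :
  (forall i, (N <= i)%nat -> q i = 0) ->
  (forall i, (m <= i)%nat -> q (S i) = 0 -> q i = 0) ->
  forall i, (m <= i)%nat -> q i = 0.
Proof.
  intros Hsupp Hstep.
  assert (Hk : forall k i, (m <= i)%nat -> (N <= i + k)%nat -> q i = 0).
  { induction k as [|k IH]; intros i Hi Hik.
    - apply Hsupp; lia.
    - apply Hstep; [exact Hi | apply IH; lia]. }
  intros i Hi; apply (Hk N); lia.
Qed.

Lemma quotient_shape (r : R) (q : tpoly) :
  0 < r -> is_tpoly q ->
  in_hprod (tpoly4 r 1 0 0) q (tpoly4 r 1 r 1) ->
  q = tpoly4 1 (q 1%nat) 1 0 /\ 0 <= q 1%nat <= r.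
Proof.
  intros Hr [Hq [N HN]] Hprod.
  apply in_hprod_linear in Hprod; [|lra|lra|exact Hq].
  destruct Hprod as [_ [H0 HS]].
  assert (Hhigh : forall i, (3 <= i)%nat -> q i = 0).
  { apply (vanishing_downward q 3 N HN); intros i Hi Hnext.
    specialize (HS i); rewrite Hnext, Rmult_0_r, Rmult_1_l in HS.
    apply hadd_0_l in HS; [|apply Hq].
    destruct i as [|[|[|i]]]; [lia|lia|lia|]; simpl in HS; lra. }
  assert (H2 : q 2%nat = 1).
  { specialize (HS 2%nat); rewrite (Hhigh 3%nat), Rmult_0_r, Rmult_1_l in HS
      by lia.
    apply hadd_0_l in HS; [simpl in HS; lra | apply Hq]. }
  assert (H1 : q 1%nat <= r).
  { specialize (HS 1%nat); rewrite H2, Rmult_1_r, Rmult_1_l in HS; simpl in HS.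
    apply hadd_self_l in HS; [exact HS | lra]. }
  assert (H00 : q 0%nat = 1).
  { simpl in H0; apply (Rmult_eq_reg_l r); lra. }
  split; [|split; [apply Hq | exact H1]].
  apply functional_extensionality; intros [|[|[|i]]]; simpl; auto.
  rewrite Hhigh by lia; destruct i; reflexivity.
Qed.

Lemma quotient_sufficient (r s : R) :
  0 < r < 1 -> 0 <= s <= r ->
  in_hprod (tpoly4 r 1 0 0) (tpoly4 1 s 1 0) (tpoly4 r 1 r 1).
Proof.
  intros Hr Hs.
  apply in_hprod_linear; [lra | lra | intros [|[|[|[|i]]]]; simpl; lra |].
  split; [apply tpoly4_is_tpoly; lra|]; split; [simpl; ring|].
  intros [|[|[|j]]]; simpl; rewrite ?Rmult_1_l, ?Rmult_1_r, ?Rmult_0_r.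
  - apply hadd_comm, hadd_self_l; nra.
  - apply hadd_self_l; lra.
  - apply hadd_0_l; lra.
  - destruct j; apply hadd_0_l; lra.
Qed.

Theorem mainTheorem8 (r : R) (hr : 0 < r < 1) :
  (forall q : tpoly, is_tpoly q ->
     (in_hprod (tpoly4 r 1 0 0) q (tpoly4 r 1 r 1) <->
      exists s, 0 <= s <= r /\ q = tpoly4 1 s 1 0))
  /\ ~ in_hprod (tpoly4 r 1 0 0) (tpoly4 1 (/ r) (/ (r * r)) 0) (tpoly4 r 1 r 1).
Proof.
  split.
  - intros q Hq; split.
    + intro Hprod; destruct (quotient_shape r q (proj1 hr) Hq Hprod) as [Eq Hs].
      exists (q 1%nat); auto.
    + intros [s [Hs ->]]; apply quotient_sufficient; assumption.
  - intro Hprod.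
    assert (Hinv1 : 0 < / r) by (apply Rinv_0_lt_compat; lra).
    assert (Hinv2 : 0 < / (r * r)) by (apply Rinv_0_lt_compat; nra).
    apply quotient_shape in Hprod; [| lra | apply tpoly4_is_tpoly; lra].
    (* the leading coefficient r^-2 would have to be 1, i.e. r = 1 *)
    destruct Hprod as [Eq _].
    assert (Hlead : / (r * r) = 1) by exact (f_equal (fun f => f 2%nat) Eq).
    assert (Hrr : r * r = 1).
    { rewrite <- (Rinv_inv (r * r)), Hlead; apply Rinv_1. }
    nra.
Qed.
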